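(* Let $\{e_j\}_{j=1}^d$ be a basis of $\mathbb C^d$ and let $x\in\mathbb C^d$ be full with respect to it, i.e. $\langle x,e_j\rangle\ne0$ for all $j$. Define the linear operator $T_x:\mathbb C^d\to\mathbb C^d$ by $$T_x=\sum_{j=1}^{d-1}\Big(|\langle x,e_j\rangle|^2\, e_j\otimes e_{j+1}^*-\langle e_j,x\rangle\langle x,e_{j+1}\rangle\, e_j\otimes e_j^*\Big).$$ Then the null space of $T_x$ is exactly $\{cx: c\in\mathbb C\}$.
   Context: $\mathbb C^d$ carries the standard inner product $\langle u,v\rangle=\sum_k u_k\overline{v_k}$. For a basis vector $e_j$, $e_j^*$ denotes the linear functional $y\mapsto\langle y,e_j\rangle$, and for $u\in\mathbb C^d$ and a linear functional $\varphi$, $u\otimes\varphi$ is the operator $y\mapsto\varphi(y)u$. *)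

From mathcomp Require Import all_boot all_algebra.
From mathcomp Require Export reals complex.
Set Implicit Arguments. Unset Strict Implicit. Unset Printing Implicit Defensive.
Import GRing.Theory Num.Theory.
Local Open Scope ring_scope.

Section Defs.
Variable R : realType.
Notation C := R[i].

Definition inner (d : nat) (u v : 'cV[C]_d) : C :=
  \sum_(k < d) u k 0 * (v k 0)^*.

Definition is_basis (d : nat) (e : 'I_d -> 'cV[C]_d) : bool :=
  let E := \matrix_(j < d) (e j)^T in row_free E && row_full E.

Definition full (d : nat) (e : 'I_d -> 'cV[C]_d) (x : 'cV[C]_d) : Prop :=
  forall j : 'I_d, inner x (e j) != 0.

(* T_x y = sum_{j=1}^{d-1} ( |<x,e_j>|^2 <y,e_{j+1}> e_j
                              - <e_j,x><x,e_{j+1}> <y,e_j> e_j ),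
   0-based: j ranges over j : 'I_d with j+1 < d, and e_{j+1} = e (insubd j j.+1). *)
Definition Tx (d : nat) (e : 'I_d -> 'cV[C]_d) (x y : 'cV[C]_d) : 'cV[C]_d :=
  \sum_(j < d | (j.+1 < d)%N)
    ( (`|inner x (e j)| ^+ 2 * inner y (e (insubd j j.+1))) *: e j
    - (inner (e j) x * inner x (e (insubd j j.+1)) * inner y (e j)) *: e j ).

End Defs.

(** The coefficient of [e_j] in [T_x y] is [conj a_j * (a_j b_{j+1} - a_{j+1} b_j)],
    where [a_j = <x,e_j>] and [b_j = <y,e_j>].  As the [e_j] are independent and
    every [a_j] is nonzero, [T_x y = 0] says exactly that consecutive ratios
    [b_j / a_j] agree, i.e. [b = c a] for one scalar [c]; then [y - c x] is
    orthogonal to a basis, hence zero. *)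
From mathcomp Require Import all_boot all_algebra.
From mathcomp Require Import reals complex.
From mathcomp Require Import ring.
Import GRing.Theory Num.Theory.
Local Open Scope ring_scope.

Lemma proportional_chain {F : fieldType} {d : nat} {a b : 'I_d -> F} :
  (forall j, a j != 0) ->
  (forall j : 'I_d, (j.+1 < d)%N ->
     a j * b (insubd j j.+1) = a (insubd j j.+1) * b j) ->
  exists c, forall j, b j = c * a j.
Proof.
move=> a_neq0 ab_cross; case: (posnP d) => [d0 | d_gt0].
  by exists 0 => j; move: (ltn_ord j); rewrite {2}d0.
pose j0 := Ordinal d_gt0; exists (b j0 / a j0).
suff bE n (ltnd : (n < d)%N) : b (Ordinal ltnd) = b j0 / a j0 * a (Ordinal ltnd).
  by case=> n ltnd; apply: bE.
elim: n ltnd => [|n IHn] ltnd.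
  by rewrite (_ : Ordinal ltnd = j0) ?divfK //; apply: val_inj.
have ltnd' : (n < d)%N by apply: ltnW.
have succE : insubd (Ordinal ltnd') n.+1 = Ordinal ltnd.
  by apply: val_inj; rewrite val_insubd /= ltnd.
have := ab_cross (Ordinal ltnd') ltnd; rewrite succE IHn => cross.
by apply: (mulfI (a_neq0 (Ordinal ltnd'))); rewrite cross; ring.
Qed.

Section InnerProduct.
Context {R : realType} {d : nat}.
Notation C := R[i].
Implicit Types (u v w : 'cV[C]_d) (c : C).

Lemma conj_inner u v : (inner u v)^* = inner v u.
Proof.
rewrite /inner rmorph_sum; apply: eq_bigr => k _.
by rewrite rmorphM /= conjCK mulrC.
Qed.

Lemma innerZl c u w : inner (c *: u) w = c * inner u w.
Proof. by rewrite /inner mulr_sumr; apply: eq_bigr => k _; rewrite !mxE mulrA. Qed.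

Lemma innerBl u v w : inner (u - v) w = inner u w - inner v w.
Proof. by rewrite /inner -sumrB; apply: eq_bigr => k _; rewrite !mxE mulrBl. Qed.

Context {e : 'I_d -> 'cV[C]_d}.
Hypothesis e_basis : is_basis e.

Let E := \matrix_(j < d) (e j)^T.

Let E_unit : E \in unitmx.
Proof. by case/andP: e_basis => E_free _; rewrite -row_free_unit. Qed.

(* The rows of [E] are the [(e j)^T], so [E *m conj w] lists the [(inner w (e j))^*]. *)
Lemma basis_orthogonal_eq0 w : (forall j, inner w (e j) = 0) -> w = 0.
Proof.
move=> w_orth.
have /(congr1 (mulmx (invmx E))) : E *m map_mx Num.conj w = 0.
  apply/matrixP => j k; rewrite ord1 !mxE.
  rewrite [RHS](_ : 0 = inner (e j) w); last by rewrite -conj_inner w_orth conjC0.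
  by apply: eq_bigr => l _; rewrite !mxE.
rewrite mulKmx // mulmx0 => /matrixP w_conj0; apply/matrixP => i k.
by have /eqP := w_conj0 i k; rewrite !mxE conjC_eq0 => /eqP.
Qed.

Lemma basis_free (c : 'I_d -> C) : \sum_j c j *: e j = 0 -> forall j, c j = 0.
Proof.
move=> comb0.
have /(congr1 (mulmx (invmx E^T))) : E^T *m (\col_j c j) = 0.
  apply/matrixP => k l; rewrite -[in RHS]comb0 ord1 summxE !mxE.
  by apply: eq_bigr => j _; rewrite !mxE mulrC.
rewrite mulKmx ?unitmx_tr // mulmx0 => /matrixP c0 j.
by have := c0 j 0; rewrite !mxE.
Qed.

End InnerProduct.

Section Tx.
Variables (R : realType) (d : nat) (e : 'I_d -> 'cV[R[i]]_d) (x : 'cV[R[i]]_d).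

Local Notation a j := (inner x (e j)).

Lemma TxE y : Tx e x y = \sum_(j < d)
  (if (j.+1 < d)%N
   then (a j)^* * (a j * inner y (e (insubd j j.+1)) - a (insubd j j.+1) * inner y (e j))
   else 0) *: e j.
Proof.
rewrite /Tx big_mkcond; apply: eq_bigr => j _.
case: ifP => _; last by rewrite scale0r.
by rewrite -scalerBl normCK -(conj_inner x); congr (_ *: _); ring.
Qed.

Hypotheses (e_basis : is_basis e) (x_full : full e x).

Lemma Tx_eq0P y : Tx e x y = 0 <->
  forall j : 'I_d, (j.+1 < d)%N ->
    a j * inner y (e (insubd j j.+1)) = a (insubd j j.+1) * inner y (e j).
Proof.
rewrite TxE; split => [Ty0 j lt_jd | cross].
  have := basis_free e_basis _ Ty0 j; rewrite lt_jd => /eqP.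
  by rewrite mulf_eq0 conjC_eq0 (negPf (x_full j)) subr_eq0 => /eqP.
apply: big1 => j _; case: ifP => [lt_jd|_]; last by rewrite scale0r.
by rewrite cross // subrr mulr0 scale0r.
Qed.

End Tx.

Theorem mainTheorem3 (R : realType) (d : nat) (e : 'I_d -> 'cV[R[i]]_d)
    (x : 'cV[R[i]]_d) :
  is_basis e -> full e x ->
  forall y : 'cV[R[i]]_d, Tx e x y = 0 <-> exists c : R[i], y = c *: x.
Proof.
move=> e_basis x_full y; rewrite Tx_eq0P //; split => [cross | [c ->] j _].
- have [c yE] := proportional_chain x_full cross.
  exists c; apply: subr0_eq; apply: (basis_orthogonal_eq0 e_basis) => j.
  by rewrite innerBl innerZl yE subrr.
- by rewrite !innerZl; ring.
Qed.
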